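(* Let $b$ be a prime, $s,m\in\mathbb{N}$, and let $\mathcal{P}$ be a digital $((t_{\mathfrak{u}})_{\mathfrak{u}\subseteq[s]},m,s)$-net over $\mathbb{F}_b$ with generating matrices $C_1^{(m)},\dots,C_s^{(m)}\in\mathbb{F}_b^{m\times m}$. Let $0=w_1\le\dots\le w_s$ be reduction indices, $\widetilde{C}_1^{(m)},\dots,\widetilde{C}_s^{(m)}$ the corresponding row reduced matrices, and let $(\widetilde{t}_{\mathfrak{u}})_{\mathfrak{u}\subseteq[s]}$ be the minimal quality parameters of the projections of the digital net generated by the $\widetilde{C}_j^{(m)}$. Then for every nonempty $\mathfrak{u}\subseteq[s]$, writing $\overline{\mathfrak{u}}=\max\mathfrak{u}$, \[ \max\{0,\, m-\max\{w_{\overline{\mathfrak{u}}},t_{\mathfrak{u}}\}\}\le \rho_m\big((\widetilde{C}_j^{(m)})_{j\in\mathfrak{u}}\big)\le \max\{0,\, m-w_{\overline{\mathfrak{u}}}\}, \] and $\widetilde{t}_{\mathfrak{u}}\le\min\{m,\max\{w_{\overline{\mathfrak{u}}},t_{\mathfrak{u}}\}\}$.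
   Context: $[s]=\{1,\dots,s\}$. Digital nets over $\mathbb{F}_b$: for matrices $C_1^{(m)},\dots,C_s^{(m)}\in\mathbb{F}_b^{m\times m}$, the generated net consists of the $b^m$ points $\boldsymbol{x}_k$, $0\le k<b^m$, with $x_{k,j}=(C_j^{(m)}\vec{k})\cdot(b^{-1},\dots,b^{-m})$, where $\vec{k}=(k_0,\dots,k_{m-1})^\top$ is the base-$b$ digit vector of $k=\sum k_ib^i$ and the product is computed over $\mathbb{F}_b$ (identified with $\{0,\dots,b-1\}$). A $(t,m,s)$-net in base $b$ is a set of $b^m$ points in $[0,1)^s$ such that every elementary interval $\prod_j[a_jb^{-d_j},(a_j+1)b^{-d_j})$ of volume $b^{t-m}$ contains exactly $b^t$ points. A digital $((t_{\mathfrak{u}})_{\mathfrak{u}\subseteq[s]},m,s)$-net is a digital net such that, for each nonempty $\mathfrak{u}\subseteq[s]$, the projection onto the coordinates in $\mathfrak{u}$ (generated by $(C_j^{(m)})_{j\in\mathfrak{u}}$) is a $(t_{\mathfrak{u}},m,|\mathfrak{u}|)$-net; the minimal quality parameter of a projection is the smallest such value. The linear independence parameter $\rho_m$ of a family of $m\times m$ matrices $(C_j)_{j\in J}$ is the largest $d$ such that for all $d_j\in\mathbb{N}_0$ ($j\in J$) with $\sum_j d_j=d$, the collection of the first $d_j$ rows of $C_j$, $j\in J$, is linearly independent over $\mathbb{F}_b$. Row reduction: $\widetilde{C}_j^{(m)}$ equals $C_j^{(m)}$ except that its last $\min(m,w_j)$ rows are set to zero. *)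

From HB Require Import structures.
From mathcomp Require Import all_boot all_order all_algebra.
Set Implicit Arguments. Unset Strict Implicit. Unset Printing Implicit Defensive.
Import Order.TTheory GRing.Theory Num.Theory.
Local Open Scope ring_scope.
From Stdlib Require Import ClassicalEpsilon.

Definition pbool (P : Prop) : bool :=
  if excluded_middle_informative P then true else false.

Section DigitalNets.
Variables (b m s : nat).

Definition digitvec (k : nat) : 'cV['F_b]_m :=
  \col_(i < m) ((k %/ b ^ i) %% b)%N%:R.

(* j-th coordinate of the k-th point of the digital net generated by C,
   x_{k,j} = (C_j k) . (b^-1, ..., b^-m), computed as a rational number;
   F_b is identified with {0, ..., b-1} via the ordinal value. *)
Definition net_point (C : 'I_s -> 'M['F_b]_m) (k : nat) (j : 'I_s) : rat :=
  \sum_(i < m) ((nat_of_ord ((C j *m digitvec k) i 0))%:R / (b%:R ^+ i.+1)).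

Definition is_proj_tnet (C : 'I_s -> 'M['F_b]_m) (u : {set 'I_s}) (t : nat) : Prop :=
  (t <= m)%N /\
  forall (d a : 'I_s -> nat),
    (\sum_(j in u) d j)%N = (m - t)%N ->
    (forall j, j \in u -> (a j < b ^ d j)%N) ->
    #|[set k : 'I_(b ^ m) | [forall j in u,
        ((a j)%:R / (b%:R ^+ d j) <= net_point C k j) &&
        (net_point C k j < (a j).+1%:R / (b%:R ^+ d j))]]| = (b ^ t)%N.

Definition is_digital_tu_net (C : 'I_s -> 'M['F_b]_m) (t : {set 'I_s} -> nat) : Prop :=
  forall u : {set 'I_s}, u != set0 -> is_proj_tnet C u (t u).

(* minimal quality parameter of the projection onto u: the smallest t
   such that the projection is a (t,m,|u|)-net (t ranges over 0..m by the
   definition of a (t,m,s)-net; m itself is always admissible). *)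
Definition min_quality (C : 'I_s -> 'M['F_b]_m) (u : {set 'I_s}) : nat :=
  \big[minn/m]_(t < m.+1 | pbool (is_proj_tnet C u t)) t.

Definition first_rows (C : 'I_s -> 'M['F_b]_m) (u : {set 'I_s}) (d : 'I_s -> nat)
  : seq 'rV['F_b]_m :=
  flatten [seq [seq row i (C j) | i : 'I_m <- enum 'I_m & (nat_of_ord i < d j)%N] | j <- enum u].

(* linear independence parameter rho_m((C_j)_{j in u}): the largest d such that
   for all d_j (j in u) with sum d_j = d, the first d_j rows of the C_j are
   linearly independent over F_b (as a family, i.e. counted with repetition).
   Such d never exceed m (more than m vectors in F_b^m are dependent). *)
Definition lin_indep_prop (C : 'I_s -> 'M['F_b]_m) (u : {set 'I_s}) (dd : nat) : Prop :=
  forall d : 'I_s -> nat,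
    (\sum_(j in u) d j)%N = dd ->
    (forall j, j \in u -> (d j <= m)%N) ->
    free (first_rows C u d).

Definition rho (C : 'I_s -> 'M['F_b]_m) (u : {set 'I_s}) : nat :=
  \max_(dd < m.+1 | pbool (lin_indep_prop C u dd)) dd.

Definition row_reduce (C : 'I_s -> 'M['F_b]_m) (w : 'I_s -> nat) (j : 'I_s)
  : 'M['F_b]_m :=
  \matrix_(r < m, c < m) (if (r < m - minn m (w j))%N then C j r c else 0).

End DigitalNets.

From HB Require Import structures.
From mathcomp Require Import all_boot all_order all_algebra.
From mathcomp Require Import zify ring.
From Stdlib Require Import ClassicalEpsilon.
Set Implicit Arguments. Unset Strict Implicit. Unset Printing Implicit Defensive.
Import Order.TTheory GRing.Theory Num.Theory.

(* The point with index k lies in the elementary box given by (d_j, a_j)_{j in u} iff for every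
   j in u the first d_j rows of C_j send the digit vector of k to the digits of a_j.  As k runs
   over [0, b^m) its digit vector runs once over F_b^m, so the number of points in the box is the
   number of solutions of a linear system in m unknowns; this is b^t for every right-hand side
   exactly when the sum(d_j) = m - t rows are linearly independent.  Hence the projection onto u
   is a (t, m, |u|)-net iff the first rows are independent in every split of m - t, i.e.
   rho >= m - t.  Row reduction keeps the first m - w_j rows of C_j and zeroes row m - w_j: since
   w_j <= w_ubar, every split of m - max(w_ubar, t_u) only sees original rows, while a split
   putting more than m - w_ubar rows on ubar hits a zero row. *)

Lemma modnM_divmod x p q : (0 < p)%N -> (0 < q)%N ->
  x %% (p * q) = x %% p + p * (x %/ p %% q).
Proof.
move=> p_gt0 q_gt0.
have Ex : x = x %/ p %/ q * (p * q) + (x %/ p %% q * p + x %% p).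
  by rewrite {1}(divn_eq x p) {1}(divn_eq (x %/ p) q) mulnDl -addnA (mulnC p q) mulnA.
rewrite {1}Ex modnMDl modn_small; first by rewrite mulnC addnC.
have := ltn_pmod (x %/ p) q_gt0; have := ltn_pmod x p_gt0; nia.
Qed.

Section Digits.
Variable b : nat.
Hypothesis b_gt0 : (0 < b)%N.

Lemma eq_modn_digits d x x' :
  (forall e, (e < d)%N -> x %/ b ^ e %% b = x' %/ b ^ e %% b) ->
  x %% b ^ d = x' %% b ^ d.
Proof.
elim: d => [|d IH] eq_digits; first by rewrite !modn1.
rewrite expnSr !modnM_divmod ?expn_gt0 ?b_gt0 // IH ?eq_digits //.
by move=> e /ltnW; apply: eq_digits.
Qed.

(* Digit [i] of a [d]-digit number is counted from the most significant end. *)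
Fixpoint nat_of_digits (y : nat -> nat) (n : nat) : nat :=
  if n is n'.+1 then nat_of_digits y n' * b + y n' else 0.

Definition digit (a d i : nat) : nat := a %/ b ^ (d - i.+1) %% b.

Lemma digit_lt a d i : (digit a d i < b)%N.
Proof. exact: ltn_pmod. Qed.

Lemma nat_of_digits_lt y n : (forall i, y i < b)%N -> (nat_of_digits y n < b ^ n)%N.
Proof.
move=> y_lt; elim: n => [|n IH] //=; rewrite expnSr; have := y_lt n; nia.
Qed.

Section DigitSequence.
Variable y : nat -> nat.
Hypothesis y_lt : forall i, (y i < b)%N.

Lemma nat_of_digitsD d e : nat_of_digits y (d + e) =
  nat_of_digits y d * b ^ e + nat_of_digits (fun i => y (d + i)) e.
Proof.
elim: e => [|e IH]; first by rewrite addn0 muln1 addn0.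
by rewrite addnS /= IH expnSr; lia.
Qed.

Lemma nat_of_digits_div d n : (d <= n)%N ->
  nat_of_digits y n %/ b ^ (n - d) = nat_of_digits y d.
Proof.
move=> le_dn; rewrite -{1}(subnKC le_dn) nat_of_digitsD divnMDl ?expn_gt0 ?b_gt0 //.
by rewrite divn_small ?addn0 // nat_of_digits_lt.
Qed.

Lemma digit_nat_of_digits d i : (i < d)%N -> digit (nat_of_digits y d) d i = y i.
Proof. by move=> lt_id; rewrite /digit nat_of_digits_div //= modnMDl modn_small. Qed.

Lemma nat_of_digits_eq d a : (a < b ^ d)%N ->
  (nat_of_digits y d = a) <-> (forall i, (i < d)%N -> y i = digit a d i).
Proof.
move=> a_lt; split=> [<- i lt_id | eq_y]; first by rewrite digit_nat_of_digits.
rewrite -(modn_small (nat_of_digits_lt d y_lt)) -(modn_small a_lt).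
apply: eq_modn_digits => e lt_ed.
have lt_id : (d - e.+1 < d)%N by lia.
have := eq_y _ lt_id; rewrite -(digit_nat_of_digits lt_id) /digit.
by rewrite (_ : d - (d - e.+1).+1 = e)%N; last lia.
Qed.

Local Open Scope ring_scope.

Lemma sum_digits_rat m : \sum_(i < m) ((y i)%:R / b%:R ^+ i.+1) =
  (nat_of_digits y m)%:R / b%:R ^+ m :> rat.
Proof.
have b_neq0 : b%:R != 0 :> rat by rewrite pnatr_eq0 -lt0n.
elim: m => [|m IH]; first by rewrite big_ord0 mul0r.
rewrite big_ord_recr /= IH natrD natrM exprS.
by field; rewrite b_neq0 expf_neq0.
Qed.

Lemma mem_badic_interval m d a : (d <= m)%N ->
  (a%:R / b%:R ^+ d <= \sum_(i < m) ((y i)%:R / b%:R ^+ i.+1 : rat) < a.+1%:R / b%:R ^+ d)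
  = (nat_of_digits y d == a).
Proof.
move=> le_dm; rewrite sum_digits_rat.
have b_neq0 : b%:R != 0 :> rat by rewrite pnatr_eq0 -lt0n.
have scaleE c : c%:R / b%:R ^+ d = (c * b ^ (m - d))%:R / b%:R ^+ m :> rat.
  rewrite natrM natrX -{2}(subnKC le_dm) exprD.
  by field; rewrite !expf_neq0.
have bm_gt0 : 0 < (b%:R ^+ m)^-1 :> rat by rewrite invr_gt0 exprn_gt0 // ltr0n.
rewrite !scaleE ler_pM2r // ltr_pM2r // ler_nat ltr_nat.
have bmd_gt0 : (0 < b ^ (m - d))%N by rewrite expn_gt0 b_gt0.
by rewrite -leq_divRL // -ltn_divLR // nat_of_digits_div // ltnS eqn_leq andbC.
Qed.

End DigitSequence.
End Digits.

Local Open Scope ring_scope.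

Section Solutions.
Variable F : fieldType.

Lemma row_free_of_surj n m (S : 'M[F]_(n, m)) :
  (forall y : 'cV_n, exists v, S *m v = y) -> row_free S.
Proof.
move=> S_surj; have : (1%:M <= S^T)%MS.
  apply/row_subP => i; have [v Sv] := S_surj (row i 1%:M)^T.
  by rewrite -[row i _]trmxK -Sv trmx_mul submxMl.
by rewrite sub1mx /row_full mxrank_tr.
Qed.

Lemma row_free_surj n m (S : 'M[F]_(n, m)) (y : 'cV_n) : row_free S -> exists v, S *m v = y.
Proof.
rewrite /row_free -mxrank_tr => S_full.
have /submxP [D yD] := submx_full y^T (S_full : row_full S^T).
by exists D^T; rewrite -[S]trmxK -trmx_mul -yD trmxK.
Qed.

Definition rows_mx {m} (s : seq 'rV[F]_m) : 'M[F]_(size s, m) := \matrix_(k < size s) s`_k.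

Lemma free_rows_mx m (s : seq 'rV[F]_m) : free s = row_free (rows_mx s).
Proof.
have combE (c : 'rV_(size s)) : c *m rows_mx s = \sum_i c 0 i *: s`_i.
  by rewrite mulmx_sum_row; apply: eq_bigr => i _; rewrite rowK.
apply/(freeP (X := in_tuple s))/idP => [s_free | S_free k k0 i].
  apply: inj_row_free => c; rewrite combE => /s_free c0.
  by apply/rowP => i; rewrite c0 mxE.
have := mulmx_free_eq0 (\row_i k i) S_free; rewrite combE.
under eq_bigr do rewrite mxE.
by rewrite k0 eqxx => /esym/eqP/rowP/(_ i); rewrite !mxE.
Qed.

Lemma rows_mx_mulmx_eq m (s : seq 'rV[F]_m) (y : seq F) (v : 'cV_m) :
  size y = size s ->
  ([seq (r *m v) 0 0 | r <- s] == y) = (rows_mx s *m v == \col_(k < size s) y`_k).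
Proof.
move=> size_y.
have entryE (k : 'I_(size s)) : (rows_mx s *m v) k 0 = (s`_k *m v) 0 0.
  by rewrite !mxE; apply: eq_bigr => j _; rewrite mxE.
apply/eqP/eqP => [<- | Sv].
  by apply/colP => k; rewrite entryE [RHS]mxE (nth_map (0 : 'rV_m)).
apply: (@eq_from_nth _ 0) => [|k]; rewrite size_map // => lt_ks.
by move/colP: Sv => /(_ (Ordinal lt_ks)); rewrite entryE [RHS]mxE (nth_map (0 : 'rV_m)).
Qed.

Lemma free_of_rows_surj m (s : seq 'rV[F]_m) :
  (forall y, size y = size s -> exists v : 'cV_m, [seq (r *m v) 0 0 | r <- s] = y) ->
  free s.
Proof.
move=> s_surj; rewrite free_rows_mx; apply: row_free_of_surj => y.
have size_y : size [seq y k 0 | k <- enum 'I_(size s)] = size s.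
  by rewrite size_map size_enum_ord.
have [v /eqP] := s_surj _ size_y; rewrite rows_mx_mulmx_eq // => /eqP Sv.
exists v; rewrite Sv; apply/colP => k.
by rewrite mxE (nth_map k) ?size_enum_ord // nth_ord_enum.
Qed.

End Solutions.

Section CountSolutions.
Variable F : finFieldType.

Lemma card_mulmx_fiber n m (S : 'M[F]_(n, m)) (y : 'cV_n) : row_free S ->
  #|[set v | S *m v == y]| = (#|F| ^ (m - n))%N.
Proof.
move=> S_free.
have fiberE (z : 'cV_n) :
    #|[set v : 'cV_m | S *m v == z]| = #|[set v : 'cV_m | S *m v == 0]|.
  have [v0 Sv0] := row_free_surj z S_free.
  rewrite -[RHS](card_imset _ (addIr v0)); apply: eq_card => v.
  rewrite inE; apply/eqP/imsetP => [Sv | [v' + ->]].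
    by exists (v - v0); rewrite ?subrK // inE mulmxBr Sv Sv0 subrr.
  by rewrite inE mulmxDr Sv0 => /eqP ->; rewrite add0r.
have : (#|{: 'cV[F]_m}| = \sum_(z : 'cV[F]_n) #|[set v | S *m v == z]|)%N.
  rewrite -sum1_card (partition_big (mulmx S) xpredT) //=.
  by apply: eq_bigr => z _; rewrite -sum1_card; apply: eq_bigl => v; rewrite inE.
rewrite (eq_bigr _ (fun z _ => fiberE z)) sum_nat_const !card_mx !muln1.
have le_nm : (n <= m)%N by rewrite -(eqP S_free) rank_leq_col.
rewrite -{1}(subnK le_nm) expnD mulnC fiberE => /eqP.
by rewrite eqn_pmul2l ?expn_gt0 ?(ltnW (card_finNzRing_gt1 F)) // => /eqP.
Qed.

Lemma card_free_rows_solutions m (s : seq 'rV[F]_m) (y : seq F) :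
  free s -> size y = size s ->
  #|[set v : 'cV_m | [seq (r *m v) 0 0 | r <- s] == y]| = (#|F| ^ (m - size s))%N.
Proof.
rewrite free_rows_mx => s_free size_y.
rewrite -(card_mulmx_fiber (\col_(k < size s) y`_k) s_free).
by apply: eq_card => v; rewrite !inE rows_mx_mulmx_eq.
Qed.

End CountSolutions.

Lemma free_map_subset (K : fieldType) (vT : vectType K) (T : eqType) (f : T -> vT)
    (P P' : seq T) :
  uniq P -> {subset P <= P'} -> free (map f P') -> free (map f P).
Proof.
move=> P_uniq sub_PP' free_P'.
have P'_uniq : uniq P' by apply: map_uniq (free_uniq free_P').
have perm_P : perm_eq [seq p <- P' | p \in P] P.
  apply: uniq_perm => [||p]; rewrite ?filter_uniq // mem_filter.
  by case pP: (p \in P) => //=; rewrite sub_PP'.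
move: free_P'; rewrite -(perm_free (perm_map f (permEl (perm_filterC (mem P) P')))).
by rewrite map_cat => /catl_free; rewrite (perm_free (perm_map f perm_P)).
Qed.

Lemma leq_summand (I : finType) (A : {pred I}) (F : I -> nat) j :
  j \in A -> (F j <= \sum_(i in A) F i)%N.
Proof. by move=> jA; rewrite (bigD1 j) //= leq_addr. Qed.

Lemma pboolP (P : Prop) : reflect P (pbool P).
Proof. by rewrite /pbool; case: excluded_middle_informative; constructor. Qed.

Section FirstRows.
Variables b m s : nat.
Implicit Types (C : 'I_s -> 'M['F_b]_m) (u : {set 'I_s}) (d w : 'I_s -> nat).

Definition first_rows_idx u d : seq ('I_s * 'I_m) :=
  [seq (j, i) | j <- enum u, i <- [seq i : 'I_m <- enum 'I_m | (i < d j)%N]].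

Definition rowp C (p : 'I_s * 'I_m) : 'rV['F_b]_m := row p.2 (C p.1).

Lemma first_rowsE C u d : first_rows C u d = map (rowp C) (first_rows_idx u d).
Proof.
rewrite /first_rows /first_rows_idx map_flatten -map_comp.
by congr flatten; apply: eq_map => j /=; rewrite -map_comp.
Qed.

Lemma mem_first_rows_idx u d p :
  (p \in first_rows_idx u d) = (p.1 \in u) && (p.2 < d p.1)%N.
Proof.
apply/allpairsPdep/andP => [[j [i [+ + ->]]] | [p1u lt_p2]].
  by rewrite mem_enum mem_filter => -> /andP [].
exists p.1, p.2; split; last by case: p {p1u lt_p2}.
  by rewrite mem_enum.
by rewrite mem_filter lt_p2 mem_enum.
Qed.

Lemma first_rows_idx_uniq u d : uniq (first_rows_idx u d).
Proof.
apply: allpairs_uniq_dep => [||[j i] [j' i'] _ _ [-> ->]] //.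
  exact: enum_uniq.
by move=> j _; apply/filter_uniq/enum_uniq.
Qed.

Lemma size_first_rows_idx u d : (forall j, j \in u -> d j <= m)%N ->
  size (first_rows_idx u d) = (\sum_(j in u) d j)%N.
Proof.
move=> d_le; rewrite size_allpairs_dep sumnE big_map -big_enum.
apply: eq_big_seq => j; rewrite mem_enum => ju.
have /= := congr1 size (filter_map val (fun n => (n < d j)%N) (enum 'I_m)).
by rewrite size_map val_enum_ord (filter_iota_ltn 0 (d_le j ju)) size_iota => <-.
Qed.

Lemma free_first_rows_le C u d d' :
  (forall j, j \in u -> d j <= d' j)%N ->
  free (first_rows C u d') -> free (first_rows C u d).
Proof.
move=> le_dd'; rewrite !first_rowsE; apply: free_map_subset (first_rows_idx_uniq u d) _.
move=> [j i]; rewrite !mem_first_rows_idx /= => /andP [ju lt_id].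
by rewrite ju (leq_trans lt_id) ?le_dd'.
Qed.

Lemma lin_indep_propW C u dd dd' :
  u != set0 -> (dd <= dd' <= m)%N -> lin_indep_prop C u dd' -> lin_indep_prop C u dd.
Proof.
move=> /set0Pn [j0 j0u] /andP [le_dd' le_dd'm] indep d sum_d d_le.
pose d' j := if j == j0 then (d j + (dd' - dd))%N else d j.
have le_d_dd : (d j0 <= dd)%N by rewrite -sum_d leq_summand.
apply: free_first_rows_le (indep d' _ _) => [j _ | | j ju]; rewrite /d'.
- by case: eqP => // _; apply: leq_addr.
- rewrite (bigD1 j0) //= eqxx (eq_bigr d) => [|j /andP [_ /negbTE ->]] //.
  by move: sum_d; rewrite (bigD1 j0) //=; lia.
- by case: eqP => [->|_]; [lia | apply: d_le].
Qed.

Lemma first_rows_row_reduce C w u d :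
  (forall j, j \in u -> d j <= m - w j)%N ->
  first_rows (row_reduce C w) u d = first_rows C u d.
Proof.
move=> d_le; rewrite !first_rowsE; apply/eq_in_map => -[j i].
rewrite mem_first_rows_idx /= => /andP [ju lt_id]; apply/rowP => c.
by rewrite !mxE /=; have := d_le j ju; case: ifP => //; lia.
Qed.

Lemma lin_indep_prop_row_reduce C w u dd :
  (forall j, j \in u -> dd <= m - w j)%N ->
  lin_indep_prop C u dd -> lin_indep_prop (row_reduce C w) u dd.
Proof.
move=> le_dd indep d sum_d d_le; rewrite first_rows_row_reduce; first exact: indep.
by move=> j ju; rewrite (leq_trans _ (le_dd j ju)) // -sum_d leq_summand.
Qed.

Lemma leq_rho C u dd :
  (dd <= m)%N -> lin_indep_prop C u dd -> (dd <= rho C u)%N.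
Proof.
rewrite -ltnS => lt_ddm indep.
by apply: (leq_bigmax_cond (Ordinal lt_ddm)); apply/pboolP.
Qed.

Lemma rho_row_reduce_le C w u j :
  j \in u -> (rho (row_reduce C w) u <= m - w j)%N.
Proof.
move=> ju; apply/bigmax_leqP => dd /pboolP indep; rewrite leqNgt; apply/negP => lt_dd.
pose d j' := if j' == j then val dd else 0%N.
have sum_d : (\sum_(j' in u) d j')%N = dd.
  by rewrite (bigD1 j) //= /d eqxx big1 ?addn0 // => j' /andP [_ /negbTE ->].
have d_le j' : j' \in u -> (d j' <= m)%N.
  by move=> _; rewrite /d; case: eqP => // _; rewrite -ltnS ltn_ord.
have lt_im : (m - w j < m)%N by have := ltn_ord dd; lia.
have zero_row :
    rowp (row_reduce C w) (j, Ordinal lt_im) \in first_rows (row_reduce C w) u d.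
  by rewrite first_rowsE map_f // mem_first_rows_idx /= ju /d eqxx.
move: (free_not0 (indep d sum_d d_le) zero_row) => /negP; apply.
by apply/eqP/rowP => c; rewrite !mxE /=; case: ifP => //; lia.
Qed.

Lemma min_quality_le C u t0 :
  is_proj_tnet C u t0 -> (min_quality C u <= t0)%N.
Proof.
move=> tnet; have [le_t0m _] := tnet; rewrite -ltnS in le_t0m.
by apply: (bigmin_le_cond m (j := Ordinal le_t0m)); apply/pboolP.
Qed.

Lemma min_quality_le_m C u : (min_quality C u <= m)%N.
Proof. exact: (bigmin_le_id _ m). Qed.

End FirstRows.

Arguments first_rows_idx {m s}.
Arguments first_rows_idx_uniq {m s}.

Section DigitalNet.
Variables b m s : nat.
Hypothesis b_prime : prime b.
Implicit Types (C : 'I_s -> 'M['F_b]_m) (u : {set 'I_s}).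

Let b_gt0 : (0 < b)%N := prime_gt0 b_prime.

Lemma Fp_val_lt (x : 'F_b) : (val x < b)%N.
Proof. by rewrite -[X in (_ < X)%N](Fp_cast b_prime); apply: ltn_ord. Qed.

Lemma Fp_eq_nat (x : 'F_b) n : (n < b)%N -> (x == n%:R) = (val x == n).
Proof.
move=> lt_nb; rewrite -(inj_eq val_inj) /= val_Fp_nat // modn_small //.
Qed.

Lemma Fp_valK (x : 'F_b) : (val x)%:R = x.
Proof. by apply/eqP; rewrite eq_sym Fp_eq_nat ?Fp_val_lt. Qed.

Lemma digitvec_inj : {in [pred k | (k < b ^ m)%N] &, injective (digitvec b m)}.
Proof.
move=> k k' lt_k lt_k' /colP eq_digits.
rewrite -(modn_small lt_k) -(modn_small lt_k').
apply: (eq_modn_digits b_gt0) => e lt_em.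
move: (eq_digits (Ordinal lt_em)); rewrite !mxE => /(congr1 val).
by rewrite /= !val_Fp_nat // !modn_mod.
Qed.

Lemma card_digitvec_set (Q : pred 'cV['F_b]_m) :
  #|[set k : 'I_(b ^ m) | Q (digitvec b m k)]| = #|[set v | Q v]|.
Proof.
have dv_inj : injective (fun k : 'I_(b ^ m) => digitvec b m k).
  by move=> k k' /digitvec_inj eq_kk'; apply/val_inj/eq_kk'; rewrite inE ltn_ord.
have dv_onto := inj_card_onto dv_inj.
have le_card : (#|{: 'cV['F_b]_m}| <= #|{: 'I_(b ^ m)}|)%N.
  by rewrite card_mx card_Fp // muln1 card_ord.
rewrite -(card_imset _ dv_inj); apply: eq_card => v; rewrite inE.
apply/imsetP/idP => [[k + ->] | Qv]; first by rewrite inE.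
have /codomP [k vE] := dv_onto le_card v.
by exists k; rewrite // inE -vE.
Qed.

Definition extend_ord (f : 'I_m -> nat) (n : nat) : nat :=
  if insub n is Some i then f i else 0%N.

Lemma extend_ordE f (i : 'I_m) : extend_ord f i = f i.
Proof. by rewrite /extend_ord valK. Qed.

Lemma extend_ord_lt f : (forall i, f i < b)%N -> forall n, (extend_ord f n < b)%N.
Proof. by move=> f_lt n; rewrite /extend_ord; case: insub. Qed.

Lemma net_point_mem_interval C k j d a :
  (d <= m)%N -> (a < b ^ d)%N ->
  (a%:R / b%:R ^+ d <= net_point C k j < a.+1%:R / b%:R ^+ d) =
  [forall i : 'I_m, (i < d)%N ==> ((C j *m digitvec b m k) i 0 == (digit b a d i)%:R)].
Proof.
move=> le_dm lt_ab.
pose y := extend_ord (fun i => val ((C j *m digitvec b m k) i 0)).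
have y_lt : forall n, (y n < b)%N by apply: extend_ord_lt => i; apply: Fp_val_lt.
have yE (i : 'I_m) : y i = val ((C j *m digitvec b m k) i 0) by apply: extend_ordE.
have -> : net_point C k j = \sum_(i < m) ((y i)%:R / b%:R ^+ i.+1).
  by apply: eq_bigr => i _; rewrite yE.
rewrite mem_badic_interval //.
apply/eqP/forallP => [/(nat_of_digits_eq b_gt0 y_lt lt_ab) y_digits i | y_digits].
  by apply/implyP => lt_id; rewrite Fp_eq_nat ?digit_lt // -yE y_digits.
apply/(nat_of_digits_eq b_gt0 y_lt lt_ab) => i lt_id.
have lt_im : (i < m)%N := leq_trans lt_id le_dm.
move: (y_digits (Ordinal lt_im)); rewrite lt_id Fp_eq_nat ?digit_lt //=.
by rewrite -yE => /eqP.
Qed.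

Lemma net_point_mem_box C u (d a : 'I_s -> nat) k :
  (forall j, j \in u -> d j <= m)%N -> (forall j, j \in u -> a j < b ^ d j)%N ->
  [forall j in u,
     ((a j)%:R / b%:R ^+ d j <= net_point C k j) &&
     (net_point C k j < (a j).+1%:R / b%:R ^+ d j)]
  = ([seq (rowp C p *m digitvec b m k) 0 0 | p <- first_rows_idx u d]
     == [seq (digit b (a p.1) (d p.1) p.2)%:R | p : 'I_s * 'I_m <- first_rows_idx u d]).
Proof.
move=> d_le a_lt.
have entryE j i : (rowp C (j, i) *m digitvec b m k) 0 0 = (C j *m digitvec b m k) i 0.
  by rewrite -row_mul mxE.
apply/forall_inP/eqP => [box | /eq_in_map box j ju].
  apply/eq_in_map => -[j i]; rewrite mem_first_rows_idx /= => /andP [ju lt_id].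
  move: (box j ju); rewrite net_point_mem_interval ?d_le ?a_lt // => /forallP/(_ i).
  by rewrite lt_id entryE => /eqP.
rewrite net_point_mem_interval ?d_le ?a_lt //; apply/forallP => i; apply/implyP => lt_id.
by have := box (j, i); rewrite mem_first_rows_idx ju lt_id entryE => /(_ isT) ->.
Qed.

Lemma lin_indep_prop_of_tnet C u t0 :
  is_proj_tnet C u t0 -> lin_indep_prop C u (m - t0).
Proof.
move=> [_ box_count] d sum_d d_le; rewrite first_rowsE.
apply: free_of_rows_surj => y; rewrite size_map => size_y.
have [g /(_ (first_rows_idx_uniq u d) size_y) gE] :=
  map_of_seq (first_rows_idx u d : seq ('I_s * 'I_m)) y 0.
pose a j := nat_of_digits b (extend_ord (fun i => val (g (j, i)))) (d j).
have g_lt j : forall n, (extend_ord (fun i => val (g (j, i))) n < b)%N.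
  by apply: extend_ord_lt => i; apply: Fp_val_lt.
have a_lt j : j \in u -> (a j < b ^ d j)%N by move=> _; apply: nat_of_digits_lt.
have : (0 < b ^ t0)%N by rewrite expn_gt0 b_gt0.
rewrite -(box_count d a sum_d a_lt) => /card_gt0P [k].
rewrite inE net_point_mem_box // => /eqP k_box.
exists (digitvec b m k); rewrite -gE -map_comp; apply: etrans k_box _.
apply/eq_in_map => -[j i]; rewrite mem_first_rows_idx /= => /andP [_ lt_id].
by rewrite (digit_nat_of_digits b_gt0 (g_lt j)) // extend_ordE Fp_valK.
Qed.

Lemma tnet_of_lin_indep_prop C u t0 :
  (t0 <= m)%N -> lin_indep_prop C u (m - t0) -> is_proj_tnet C u t0.
Proof.
move=> le_t0m indep; split=> // d a sum_d a_lt.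
have d_le j : j \in u -> (d j <= m)%N.
  by move=> ju; rewrite (leq_trans _ (leq_subr t0 m)) // -sum_d leq_summand.
pose target : seq 'F_b :=
  [seq (digit b (a p.1) (d p.1) p.2)%:R | p : 'I_s * 'I_m <- first_rows_idx u d].
pose solves (v : 'cV_m) := [seq (r *m v) 0 0 | r <- first_rows C u d] == target.
transitivity #|[set k : 'I_(b ^ m) | solves (digitvec b m k)]|.
  by apply: eq_card => k; rewrite !inE net_point_mem_box // /solves first_rowsE -map_comp.
rewrite card_digitvec_set /solves card_free_rows_solutions ?indep //.
  by rewrite first_rowsE size_map size_first_rows_idx // card_Fp // sum_d subKn.
by rewrite first_rowsE !size_map.
Qed.

Lemma proj_tnetP C u t0 :
  is_proj_tnet C u t0 <-> (t0 <= m)%N /\ lin_indep_prop C u (m - t0).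
Proof.
split=> [tnet | [le_t0m indep]]; last exact: tnet_of_lin_indep_prop.
by split; [case: tnet | apply: lin_indep_prop_of_tnet].
Qed.

End DigitalNet.

Unset Implicit Arguments.

Theorem corollary1 (b s m : nat) (Hb : prime b)
  (C : 'I_s -> 'M['F_b]_m) (t : {set 'I_s} -> nat)
  (Hnet : is_digital_tu_net C t)
  (w : 'I_s -> nat)
  (Hw1 : forall j : 'I_s, nat_of_ord j = 0%N -> w j = 0%N)
  (Hwmono : forall i j : 'I_s, (i <= j)%N -> (w i <= w j)%N) :
  forall (u : {set 'I_s}) (ubar : 'I_s),
    u != set0 -> ubar \in u -> (forall j, j \in u -> (j <= ubar)%N) ->
    [/\ (maxn 0 (m - maxn (w ubar) (t u)) <= rho (row_reduce C w) u)%N,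
        (rho (row_reduce C w) u <= maxn 0 (m - w ubar))%N
      & (min_quality (row_reduce C w) u <= minn m (maxn (w ubar) (t u)))%N].
Proof.
move=> u ubar u_ne0 ubar_u ubar_max.
set T := maxn (w ubar) (t u).
have [_ indepC] := (proj_tnetP Hb C u (t u)).1 (Hnet u u_ne0).
have indepR : lin_indep_prop (row_reduce C w) u (m - T).
  apply: lin_indep_prop_row_reduce => [j ju|].
    by have := Hwmono _ _ (ubar_max j ju); lia.
  by apply: lin_indep_propW u_ne0 _ indepC; lia.
split; rewrite ?max0n.
- by rewrite leq_rho ?leq_subr.
- exact: rho_row_reduce_le.
case: (leqP m T) => [_ | lt_Tm]; first exact: min_quality_le_m.
by rewrite min_quality_le // proj_tnetP ?(ltnW lt_Tm).
Qed.
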